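(* Let $\mathcal{D}$ be an $S(2,k,v)$ and $G_1=1$-$\mathrm{BIG}(\mathcal{D})$. If $$\alpha(G_1) > k\left\lfloor \frac{v(v-1)}{k^2v-k^3+k^2-k}\right\rfloor,$$ then $G_1$ is not silver.
   Context: A Steiner $2$-design $S(2,k,v)$ ($2<k<v$) is a pair $(V,\mathcal{B})$ with $|V|=v$ and $\mathcal{B}$ a collection of $k$-subsets of $V$ (blocks) such that every $2$-subset of $V$ lies in exactly one block. The $1$-block intersection graph $1$-$\mathrm{BIG}(\mathcal{D})$ has the blocks as vertices, two blocks adjacent iff they intersect in exactly one element; it is $k(v-k)/(k-1)$-regular with $v(v-1)/(k(k-1))$ vertices. $\alpha(G)$ denotes the independence number; an $\alpha$-set is a maximum independent set. Let $G$ be an $r$-regular graph and $c$ a proper $(r+1)$-coloring of $G$. A vertex $x$ is rainbow with respect to $c$ if every one of the $r+1$ colors appears on $N[x]=N(x)\cup\{x\}$. Given an $\alpha$-set $I$, $c$ is silver with respect to $I$ if every $x\in I$ is rainbow; $G$ is silver if it admits a silver coloring with respect to some $\alpha$-set. *)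

From mathcomp Require Import all_boot.
Set Implicit Arguments. Unset Strict Implicit. Unset Printing Implicit Defensive.

(* A simple graph is given by a vertex set [Vs : {set T}] and a symmetric
   irreflexive adjacency relation [adj : rel T] (only its restriction to Vs
   matters). *)

(* Steiner 2-design S(2,k,v) on the point set V (v = #|V|) with block set B. *)
Definition steiner_2design (V : finType) (k : nat) (B : {set {set V}}) : Prop :=
  [/\ 2 < k, k < #|V|,
      (forall b, b \in B -> #|b| = k) &
      (forall x y : V, x != y ->
         #|[set b in B | (x \in b) && (y \in b)]| = 1)].

Definition big1_adj (V : finType) : rel {set V} :=
  fun b1 b2 => (b1 != b2) && (#|b1 :&: b2| == 1).

Definition independent (T : finType) (Vs : {set T}) (adj : rel T) (I : {set T}) : bool :=
  (I \subset Vs) && [forall x in I, forall y in I, ~~ adj x y].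

Definition alpha (T : finType) (Vs : {set T}) (adj : rel T) : nat :=
  \max_(I in powerset Vs | independent Vs adj I) #|I|.

Definition alpha_set (T : finType) (Vs : {set T}) (adj : rel T) (I : {set T}) : Prop :=
  independent Vs adj I /\ #|I| = alpha Vs adj.

Definition proper_coloring (T : finType) (Vs : {set T}) (adj : rel T) (m : nat)
  (c : T -> nat) : Prop :=
  (forall x, x \in Vs -> c x < m) /\
  (forall x y, x \in Vs -> y \in Vs -> adj x y -> c x <> c y).

Definition closed_nbhd (T : finType) (Vs : {set T}) (adj : rel T) (x : T) : {set T} :=
  [set y in Vs | (y == x) || adj x y].

Definition rainbow (T : finType) (Vs : {set T}) (adj : rel T) (m : nat)
  (c : T -> nat) (x : T) : Prop :=
  forall i, i < m -> exists2 y, y \in closed_nbhd Vs adj x & c y = i.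

(* For an r-regular graph: c is a silver (r+1)-coloring w.r.t. the alpha-set I *)
Definition silver_wrt (T : finType) (Vs : {set T}) (adj : rel T) (r : nat)
  (c : T -> nat) (I : {set T}) : Prop :=
  alpha_set Vs adj I /\ proper_coloring Vs adj r.+1 c /\
  (forall x, x \in I -> rainbow Vs adj r.+1 c x).

Definition silver (T : finType) (Vs : {set T}) (adj : rel T) (r : nat) : Prop :=
  exists (I : {set T}) (c : T -> nat), silver_wrt Vs adj r c I.

(** Two blocks of a Steiner 2-design share at most one point, so an
    independent set [I] of the 1-block intersection graph consists of pairwise
    disjoint blocks, and a block [y] lies in the closed neighbourhood of at
    most [#|y| = k] members of [I].  If every member of [I] is rainbow, each of
    the [d + 1] colour classes ([d = k(v-k)/(k-1) = k(r-1)] the degree, [r]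
    the replication number) meets all the neighbourhoods [N[x]], [x \in I],
    so it has more than [q] blocks when [alpha = #|I| > k q].  Hence
    [b >= (d+1)(q+1)]; but the denominator of [q] is [k(k-1)(d+1)] and
    [b k (k-1) = v (v-1)], so [b < (d+1)(q+1)]. *)

From mathcomp Require Import all_boot.
From mathcomp Require Import zify.

Set Implicit Arguments.
Unset Strict Implicit.
Unset Printing Implicit Defensive.

Lemma sum_nat_pred_card (T : finType) (A : {set T}) (p : pred T) :
  \sum_(y in A) (p y : nat) = #|[set y in A | p y]|.
Proof.
rewrite -sum1_card (eq_bigl _ _ (fun y => in_set _ _)) big_mkcondr /=.
by apply: eq_bigr => y _; case: (p y).
Qed.

Lemma card_meeting_disjoint_family (T : finType) (F : {set {set T}}) (y : {set T}) :
  {in F &, forall a b : {set T}, a != b -> [disjoint a & b]} ->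
  #|[set x in F | ~~ [disjoint x & y]]| <= #|y|.
Proof.
move=> disjF; set M := [set x in F | _].
pose pt (x : {set T}) := [pick p in x :&: y].
have pt_in x : x \in M -> exists2 p, pt x = Some p & p \in x :&: y.
  rewrite inE -setI_eq0 => /andP[_ /set0Pn[p0 p0xy]].
  by rewrite /pt; case: pickP => [p | /(_ p0)]; [exists p | rewrite p0xy].
have pt_inj : {in M &, injective pt}.
  move=> a b aM bM eq_ab.
  have [p pa /setIP[pa' _]] := pt_in a aM; have [q qb /setIP[qb' _]] := pt_in b bM.
  move: pa; rewrite eq_ab qb => -[eq_qp]; rewrite eq_qp in qb'.
  move: aM bM; rewrite !inE => /andP[aF _] /andP[bF _].
  apply/eqP/negPn/negP => neq_ab.
  have := disjF a b aF bF neq_ab; rewrite -setI_eq0 => /eqP ab0.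
  by have := in_set0 p; rewrite -ab0 inE pa' qb'.
rewrite -(card_in_imset pt_inj) -(card_imset y (@Some_inj _)).
apply: subset_leq_card; apply/subsetP => _ /imsetP[x xM ->].
by have [p -> /setIP[_ py]] := pt_in x xM; apply: imset_f.
Qed.

Section SteinerDesign.
Variables (V : finType) (k : nat) (B : {set {set V}}).
Hypothesis design : steiner_2design k B.

Lemma steiner_replication x : #|[set b in B | x \in b]| * (k - 1) = #|V| - 1.
Proof.
have [_ _ Bk B_pair] := design.
rewrite -sum_nat_const [RHS]subn1 -(cardsC1 x) -sum1_card.
transitivity (\sum_(b in [set b in B | x \in b]) \sum_(y in [set~ x]) (y \in b : nat)).
  apply: eq_bigr => b; rewrite inE => /andP[bB xb]; rewrite sum_nat_pred_card.
  have -> : [set y in [set~ x] | y \in b] = b :\ x by apply/setP => y; rewrite !inE andbC.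
  by rewrite -(Bk _ bB) (cardsD1 x b) xb add1n subn1.
rewrite exchange_big /=; apply: eq_bigr => y; rewrite !inE => neq_yx.
rewrite sum_nat_pred_card -(B_pair x y) 1?eq_sym //.
by apply: eq_card => b; rewrite !inE andbA.
Qed.

Lemma steiner_incidences : #|B| * k * (k - 1) = #|V| * (#|V| - 1).
Proof.
have [_ _ Bk _] := design.
have -> : #|B| * k = \sum_(x in [set: V]) #|[set b in B | x \in b]|.
  rewrite -sum_nat_const.
  transitivity (\sum_(b in B) \sum_(x in [set: V]) (x \in b : nat)).
    apply: eq_bigr => b bB; rewrite sum_nat_pred_card -(Bk _ bB).
    by apply: eq_card => x; rewrite !inE.
  by rewrite exchange_big /=; apply: eq_bigr => x _; rewrite sum_nat_pred_card.
rewrite big_distrl /=; under eq_bigr => x _ do rewrite steiner_replication.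
by rewrite sum_nat_const cardsT.
Qed.

Lemma steiner_blocks_meet_le1 b1 b2 :
  b1 \in B -> b2 \in B -> b1 != b2 -> #|b1 :&: b2| <= 1.
Proof.
have [_ _ _ B_pair] := design.
move=> b1B b2B neq_b; rewrite leqNgt; apply/negP => /card_gt1P[p [q [pb qb neq_pq]]].
move: pb qb; rewrite !inE => /andP[pb1 pb2] /andP[qb1 qb2].
suff : 1 < #|[set b in B | p \in b & q \in b]| by rewrite B_pair.
by apply/card_gt1P; exists b1, b2; rewrite !inE b1B b2B pb1 pb2 qb1 qb2.
Qed.

Lemma big1_independent_disjoint I :
  independent B (@big1_adj V) I ->
  {in I &, forall a b : {set V}, a != b -> [disjoint a & b]}.
Proof.
move=> /andP[/subsetP IB /forall_inP indI] a b aI bI neq_ab.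
have := forall_inP (indI a aI) b bI; rewrite /big1_adj neq_ab /= => card_ab_neq1.
have := steiner_blocks_meet_le1 (IB a aI) (IB b bI) neq_ab.
by rewrite leq_eqVlt (negbTE card_ab_neq1) ltnS leqn0 cards_eq0 setI_eq0.
Qed.

Lemma big1_closed_nbhd_meet x y :
  x \in B -> y \in closed_nbhd B (@big1_adj V) x -> ~~ [disjoint x & y].
Proof.
have [k_gt2 _ Bk _] := design.
move=> xB; rewrite inE -setI_eq0 -cards_eq0 => /andP[_ /orP[/eqP-> | /andP[_ /eqP->]]] //.
by rewrite setIid Bk // -lt0n (ltn_trans _ k_gt2).
Qed.

Lemma rainbow_independent_color_class I (c : {set V} -> nat) m i :
  independent B (@big1_adj V) I ->
  (forall x, x \in I -> rainbow B (@big1_adj V) m c x) -> i < m ->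
  #|I| <= k * #|[set y in B | c y == i]|.
Proof.
move=> indI rainI lt_im; have [_ _ Bk _] := design.
have IB := subsetP (proj1 (andP indI)).
set C := [set y in B | c y == i].
rewrite -sum1_card.
apply: (@leq_trans (\sum_(x in I) \sum_(y in C) (~~ [disjoint x & y] : nat))).
  apply: leq_sum => x xI; rewrite sum_nat_pred_card card_gt0; apply/set0Pn.
  have [y yN cy] := rainI x xI i lt_im.
  exists y; rewrite !inE cy eqxx (big1_closed_nbhd_meet (IB x xI) yN) !andbT.
  by move: yN; rewrite inE => /andP[].
rewrite exchange_big /= mulnC -sum_nat_const.
apply: leq_sum => y; rewrite inE => /andP[yB _].
rewrite sum_nat_pred_card -(Bk y yB).
exact: card_meeting_disjoint_family (big1_independent_disjoint indI).
Qed.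

End SteinerDesign.

Lemma sum_card_color_classes (T : finType) (Vs : {set T}) m (c : T -> nat) :
  (forall x, x \in Vs -> c x < m) ->
  \sum_(i < m) #|[set y in Vs | c y == i]| = #|Vs|.
Proof.
move=> c_lt; rewrite -sum1_card.
transitivity (\sum_(i < m) \sum_(y in Vs) (c y == i : nat)).
  by apply: eq_bigr => i _; rewrite sum_nat_pred_card.
rewrite exchange_big /=; apply: eq_bigr => y yVs.
rewrite (bigD1 (Ordinal (c_lt y yVs))) //= eqxx big1 // => i.
by rewrite -val_eqE /= eq_sym => /negbTE->.
Qed.

Lemma degree_by_replication k v r :
  1 < k -> k < v -> (k - 1) * r = v - 1 -> k * (v - k) %/ (k - 1) = k * (r - 1).
Proof.
move=> k_gt1 lt_kv rep.
have -> : k * (v - k) = (k - 1) * (k * (r - 1)) by nia.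
by rewrite mulKn // subn_gt0.
Qed.

Lemma denominator_by_replication k v r :
  0 < k -> k < v -> (k - 1) * r = v - 1 ->
  k ^ 2 * v + k ^ 2 - (k ^ 3 + k) = k * (k - 1) * (k * (r - 1)).+1.
Proof. by move=> k_gt0 lt_kv rep; nia. Qed.

Lemma ltn_mul_divn_succ b e m :
  0 < e -> b < m.+1 * ((b * e) %/ (e * m.+1)).+1.
Proof.
move=> e_gt0; have := @ltn_ceil (b * e) (e * m.+1).
rewrite muln_gt0 e_gt0 => /(_ isT); set q := (_ %/ _).+1.
by rewrite [q * _]mulnCA [e * _]mulnC [q * _]mulnC ltn_pmul2r.
Qed.

Theorem theorem4 (V : finType) (k : nat) (B : {set {set V}}) :
  steiner_2design k B ->
  k * ((#|V| * (#|V| - 1)) %/ ((k ^ 2 * #|V| + k ^ 2) - (k ^ 3 + k)))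
    < alpha B (@big1_adj V) ->
  ~ silver B (@big1_adj V) ((k * (#|V| - k)) %/ (k - 1)).
Proof.
move=> design lt_alpha [I [c [[indI cardI] [[c_lt _] rainI]]]].
have [k_gt2 lt_kv _ _] := design.
have k_gt1 := ltnW k_gt2; have k_gt0 := ltnW k_gt1.
have /card_gt0P[x0 _] : 0 < #|V| by apply: leq_ltn_trans lt_kv.
have rep : (k - 1) * #|[set b in B | x0 \in b]| = #|V| - 1.
  by rewrite mulnC steiner_replication.
rewrite (degree_by_replication k_gt1 lt_kv rep) in c_lt rainI.
rewrite (denominator_by_replication k_gt0 lt_kv rep) in lt_alpha.
rewrite -(steiner_incidences design) -mulnA -cardI in lt_alpha.
set d := k * _ in c_lt rainI lt_alpha; set q := _ %/ _ in lt_alpha.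
have big_classes i : i < d.+1 -> q < #|[set y in B | c y == i]|.
  move=> lt_id; rewrite -(ltn_pmul2l k_gt0).
  exact: leq_trans lt_alpha (rainbow_independent_color_class design indI rainI lt_id).
have : d.+1 * q.+1 <= #|B|.
  rewrite -(sum_card_color_classes c_lt).
  have -> : d.+1 * q.+1 = \sum_(i < d.+1) q.+1 by rewrite big_const_ord iter_addn_0 mulnC.
  by apply: leq_sum => i _; apply: big_classes.
apply/negP; rewrite -ltnNge ltn_mul_divn_succ //.
by rewrite muln_gt0 k_gt0 subn_gt0.
Qed.
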